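(* Fix $n \ge n_0$ where $n_0$ is a sufficiently large universal constant. Let $G$ be drawn uniformly at random from $\mathcal{G}_{2n}$. With probability at least $1 - \frac{1}{n}$, $G$ is $\beta$-balanced for $\beta = 8 n$.
   Context: Fix disjoint vertex sets $L,R$ with $|L|=|R|=n$ and a fixed perfect matching $M$ of directed edges from $L$ to $R$. $\mathcal{G}_{2n}$ is the set of all unweighted directed graphs on vertex set $L\cup R$ whose set of edges from $L$ to $R$ is exactly $M$, whose edges from $R$ to $L$ form an arbitrary subset of $R\times L$, and which have no other edges (equivalently, a uniform element includes each pair $(v,u)\in R\times L$ as an edge independently with probability $1/2$). An unweighted directed graph is $\beta$-balanced if it is strongly connected and for every $\varnothing\ne S\subsetneq V$ the number of edges leaving $S$ is at most $\beta$ times the number of edges entering $S$. *)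

From mathcomp Require Import all_boot all_order all_fingroup all_algebra.
Set Implicit Arguments. Unset Strict Implicit. Unset Printing Implicit Defensive.

(* Vertex set L ∪ R: inl i is the i-th vertex of L, inr j the j-th of R. *)
Definition vtx (n : nat) : finType := ('I_n + 'I_n)%type.

(* The graph of G_{2n} determined by the perfect matching M (edges inl i -> inr (M i))
   and the set E ⊆ R × L of backward edges ((j,i) ∈ E means edge inr j -> inl i). *)
Definition gadj (n : nat) (M : {perm 'I_n}) (E : {set 'I_n * 'I_n}) : rel (vtx n) :=
  fun u v =>
    match u, v with
    | inl i, inr j => M i == j
    | inr j, inl i => (j, i) \in E
    | _, _ => false
    end.

Definition strongly_connected (T : finType) (e : rel T) : bool :=
  [forall u : T, forall v : T, connect e u v].

Definition out_edges (T : finType) (e : rel T) (S : {set T}) : nat :=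
  #|[set p : T * T | [&& e p.1 p.2, p.1 \in S & p.2 \notin S]]|.
Definition in_edges (T : finType) (e : rel T) (S : {set T}) : nat :=
  #|[set p : T * T | [&& e p.1 p.2, p.1 \notin S & p.2 \in S]]|.

Definition balanced (T : finType) (e : rel T) (beta : nat) : bool :=
  strongly_connected e &&
  [forall S : {set T}, (S != set0) ==> (S != setT) ==>
    (out_edges e S <= beta * in_edges e S)].

Definition prob_E (n : nat) (P : pred {set 'I_n * 'I_n}) : rat :=
  (#|[set E : {set 'I_n * 'I_n} | P E]|%:R /
   #|{set 'I_n * 'I_n}|%:R)%R.

From mathcomp Require Import all_boot all_order all_fingroup all_algebra.
From mathcomp Require Import zify ring lra.
Set Implicit Arguments. Unset Strict Implicit. Unset Printing Implicit Defensive.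
Import Order.TTheory GRing.Theory Num.Theory.

(* A cut S is entered by the matching edges from L \ S into R ∩ S and by the
   backward edges from R \ S into L ∩ S, and it is left by at most n matching
   edges plus |R ∩ S| |L \ S| backward edges.  If the backward edge set E meets
   every rectangle X × Y ⊆ R × L of area at least 3n, and every rectangle of
   shape (n-3) × 1 or 1 × (n-3), then counting these edges shows that every
   proper cut is entered, and entered by at least 1/(8n) of the edges leaving it.
   A union bound over the at most 4^n large and 2n C(n,3) thin rectangles shows
   that a uniform E misses one of them with probability at most
   (1 + 16 n^4) / 2^n <= 1/n. *)

Lemma strongly_connected_in_edges (T : finType) (e : rel T) :
  (forall S : {set T}, S != set0 -> S != setT -> 0 < in_edges e S) ->
  strongly_connected e.
Proof.
move=> in_gt0; apply/forallP => u; apply/forallP => v.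
pose S := [set w | connect e w v].
have [ST | /eqP SnT] := S =P setT; first by have := in_setT u; rewrite -ST inE.
have Sn0 : S != set0 by apply/set0Pn; exists v; rewrite inE connect0.
have /card_gt0P [[w x]] := in_gt0 S Sn0 SnT.
rewrite !inE /= => /and3P [ewx wS xv].
by case/negP: wS; apply: connect_trans (connect1 ewx) xv.
Qed.

Lemma exists_subset_card (T : finType) (B : {set T}) k :
  k <= #|B| -> exists2 A : {set T}, A \subset B & #|A| = k.
Proof.
rewrite -bin_gt0 -cards_draws => /card_gt0P [A].
by rewrite inE => /andP [sAB /eqP cardA]; exists A.
Qed.

Lemma card_bigcup_le (I T : finType) (P : pred I) (F : I -> {set T}) :
  #|\bigcup_(i | P i) F i| <= \sum_(i | P i) #|F i|.
Proof.
elim/big_rec2: _ => [|i m U _ le_U]; first by rewrite cards0.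
by rewrite (leq_trans (leq_card_setU _ _).1) ?leq_add2l.
Qed.

Lemma card_sets_disjoint (T : finType) (D : {set T}) :
  #|[set E : {set T} | [disjoint E & D]]| = 2 ^ #|~: D|.
Proof. by rewrite -card_powerset; apply: eq_card => E; rewrite inE powersetCE. Qed.

Lemma ffact_le_expn n m : n ^_ m <= n ^ m.
Proof.
rewrite ffact_prod -[in n ^ m](card_ord m) -prod_nat_const.
by apply: leq_prod => i _; apply: leq_subr.
Qed.

Lemma bin_le_expn n m : 'C(n, m) <= n ^ m.
Proof. by rewrite (leq_trans _ (ffact_le_expn n m)) // -bin_ffact leq_pmulr ?fact_gt0. Qed.

Lemma card_sets (T : finType) : #|{set T}| = 2 ^ #|T|.
Proof. by rewrite -[#|{set T}|]cardsT -powersetT card_powerset cardsT. Qed.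

Lemma exp2_ge_poly n : 64 <= n -> 32 * n ^ 5 <= 2 ^ n.
Proof.
elim: n => // n IH; rewrite leq_eqVlt => /orP [/eqP <- | n_ge64].
  by rewrite -[32]/(2 ^ 5) -[64]/(2 ^ 6) -expnM -expnD leq_exp2l.
have step : n.+1 ^ 5 <= 2 * n ^ 5 by rewrite !expnS expn0; nia.
by rewrite (leq_trans (leq_mul (leqnn 32) step)) // mulnCA [2 ^ n.+1]expnS leq_mul2l IH.
Qed.

Section Cut.
Variables (n : nat) (M : {perm 'I_n}) (E : {set 'I_n * 'I_n}) (S : {set vtx n}).

Definition left_part : {set 'I_n} := [set i | (inl i : vtx n) \in S].
Definition right_part : {set 'I_n} := [set j | (inr j : vtx n) \in S].
Definition matching_in : {set 'I_n} :=
  [set i | ((inl i : vtx n) \notin S) && ((inr (M i) : vtx n) \in S)].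

Let forward (i : 'I_n) : vtx n * vtx n := (inl i, inr (M i)).
Let backward (p : 'I_n * 'I_n) : vtx n * vtx n := (inr p.1, inl p.2).

Lemma card_cut_parts_bounds : S != set0 -> S != setT ->
  0 < #|left_part| + #|right_part| < n + n.
Proof.
move=> /set0Pn [v vS]; rewrite -subTset => /subsetPn [w _ wS].
have := cardsC left_part; have := cardsC right_part; rewrite card_ord.
have in_gt0 (A : {set 'I_n}) i : i \in A -> 0 < #|A| by move=> iA; apply/card_gt0P; exists i.
have : 0 < #|left_part| + #|right_part|.
  rewrite addn_gt0; case: v vS => i iS; apply/orP; [left|right];
    by apply: (in_gt0 _ i); rewrite inE.
have : 0 < #|~: left_part| + #|~: right_part|.
  rewrite addn_gt0; case: w wS => i iS; apply/orP; [left|right];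
    by apply: (in_gt0 _ i); rewrite !inE.
lia.
Qed.

Lemma out_edges_gadj_le :
  out_edges (gadj M E) S <= n + #|right_part| * #|~: left_part|.
Proof.
have sub : [set p | [&& gadj M E p.1 p.2, p.1 \in S & p.2 \notin S]]
    \subset forward @: setT :|: backward @: setX right_part (~: left_part).
  apply/subsetP => -[[i|j] [i'|j']]; rewrite !inE //=.
    by case/and3P => /eqP <- _ _; rewrite imset_f.
  case/and3P => _ jS iS; apply/orP; right.
  by apply/imsetP; exists (j, i'); rewrite // !inE jS iS.
rewrite (leq_trans (subset_leq_card sub)) // (leq_trans (leq_card_setU _ _).1) //.
rewrite leq_add // (leq_trans (leq_imset_card _ _)) //; first by rewrite cardsT card_ord.
by rewrite cardsX.
Qed.

Lemma card_matching_in_le : #|matching_in| <= in_edges (gadj M E) S.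
Proof.
rewrite -(card_in_imset (f := forward)); last by move=> i j _ _ [].
apply/subset_leq_card/subsetP => ? /imsetP [i]; rewrite !inE => /andP [iS jS] ->.
by rewrite /= iS jS eqxx.
Qed.

Lemma card_backward_in_le :
  #|E :&: setX (~: right_part) left_part| <= in_edges (gadj M E) S.
Proof.
rewrite -(card_in_imset (f := backward)); last by move=> [? ?] [? ?] _ _ [-> ->].
apply/subset_leq_card/subsetP => ? /imsetP [[j i]].
by rewrite !inE /= => /and3P [jiE jS iS] ->; rewrite /= jiE jS iS.
Qed.

Lemma card_right_part_le : #|right_part| <= #|matching_in| + #|left_part|.
Proof.
have sub : right_part \subset M @: matching_in :|: M @: left_part.
  apply/subsetP => j; rewrite !inE => jS; rewrite -[j](permKV M).
  case iS: (inl ((M^-1)%g j) \in S).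
    by rewrite orbC imset_f // inE.
  by rewrite imset_f // inE iS permKV jS.
rewrite (leq_trans (subset_leq_card sub)) // (leq_trans (leq_card_setU _ _).1) //.
by rewrite leq_add // leq_imset_card.
Qed.

End Cut.

(* a, b: sizes of L ∩ S and R ∩ S, with complements of sizes a', b';
   s, e: matching and backward edges entering S; I: all edges entering S;
   y0: vertices of L ∩ S entered by no backward edge from R \ S. *)
Lemma cut_balance_arith n a a' b b' s e y0 I :
  a + a' = n -> b + b' = n -> b <= s + a -> a <= y0 + e -> b' * y0 < 3 * n ->
  y0 <= n -> s <= I -> e <= I -> 0 < I -> n + b * a' <= 8 * n * I.
Proof.
move=> aa' bb' le_b le_a lt_y0 le_y0 le_s le_e I_gt0.
have le_a' : a' <= b' + s by lia.
have le_ba' : b * a' <= s * n + a * a' by nia.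
have le_aa' : a * a' <= y0 * a' + e * n by nia.
have lt_y0a' : y0 * a' < 3 * n + n * s by nia.
nia.
Qed.

Section WellSpread.
Variables (n : nat) (E : {set 'I_n * 'I_n}).
Hypothesis n_ge16 : 16 <= n.
Hypothesis meets_large : forall X Y : {set 'I_n},
  3 * n <= #|X| * #|Y| -> ~~ [disjoint E & setX X Y].
Hypothesis meets_column : forall (l : 'I_n) (X : {set 'I_n}),
  #|X| = n - 3 -> ~~ [disjoint E & setX X [set l]].
Hypothesis meets_row : forall (r : 'I_n) (Y : {set 'I_n}),
  #|Y| = n - 3 -> ~~ [disjoint E & setX [set r] Y].

Lemma meets_crossing (X Y : {set 'I_n}) : X != set0 -> Y != set0 -> n <= #|X| + #|Y| ->
  ~~ [disjoint E & setX X Y].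
Proof.
move=> /set0Pn [x xX] /set0Pn [y yY] nXY.
have [le3n | lt3n] := leqP (3 * n) (#|X| * #|Y|); first exact: meets_large.
have [X_gt0 Y_gt0] : 0 < #|X| /\ 0 < #|Y|.
  by split; apply/card_gt0P; [exists x | exists y].
have [le_X | le_Y] : n - 3 <= #|X| \/ n - 3 <= #|Y| by nia.
- have [X' sX' cardX'] := exists_subset_card le_X.
  apply: contra (meets_column y cardX'); apply/disjointWr/setXS => //.
  by rewrite sub1set.
- have [Y' sY' cardY'] := exists_subset_card le_Y.
  apply: contra (meets_row x cardY'); apply/disjointWr/setXS => //.
  by rewrite sub1set.
Qed.

Lemma card_le_avoided (X Y : {set 'I_n}) : exists y0,
  [/\ y0 <= n, #|X| * y0 < 3 * n & #|Y| <= y0 + #|E :&: setX X Y|].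
Proof.
pose hit := [set p.2 | p in E :&: setX X Y].
exists #|Y :\: hit|; split.
- by rewrite (leq_trans (max_card _)) ?card_ord.
- rewrite ltnNge; apply/negP => /meets_large/negP; apply.
  rewrite disjoint_subset; apply/subsetP => -[x y] pE; rewrite !inE /=.
  apply/and3P => -[xX y_nhit yY]; case/negP: y_nhit.
  by apply/imsetP; exists (x, y); rewrite // !inE pE xX yY.
- rewrite -(cardsID hit Y) addnC leq_add2l.
  by rewrite (leq_trans (subset_leq_card (subsetIr Y hit))) ?leq_imset_card.
Qed.

Variable M : {perm 'I_n}.

Lemma in_edges_gadj_gt0 S : S != set0 -> S != setT -> 0 < in_edges (gadj M E) S.
Proof.
move=> S_n0 S_nT; rewrite lt0n; apply/negP => /eqP in0.
have disjE : [disjoint E & setX (~: right_part S) (left_part S)].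
  by rewrite -setI_eq0 -cards_eq0 -leqn0 -in0 card_backward_in_le.
have := card_matching_in_le M E S; have := card_right_part_le M S.
have := card_cut_parts_bounds S_n0 S_nT; have := cardsC (right_part S).
rewrite card_ord in0 => cardC bounds le_B le_match.
suff: ~~ [disjoint E & setX (~: right_part S) (left_part S)] by rewrite disjE.
apply: meets_crossing; rewrite -?card_gt0; lia.
Qed.

Lemma well_spread_balanced : balanced (gadj M E) (8 * n).
Proof.
apply/andP; split; first exact/strongly_connected_in_edges/in_edges_gadj_gt0.
apply/forallP => S; apply/implyP => S_n0; apply/implyP => S_nT.
have [y0 [le_y0 lt_y0 le_A]] := card_le_avoided (~: right_part S) (left_part S).
apply: leq_trans (out_edges_gadj_le M E S) _.
have := cardsC (left_part S); have := cardsC (right_part S).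
rewrite card_ord => cardCB cardCA.
apply: (cut_balance_arith cardCA cardCB (card_right_part_le M S) le_A lt_y0 le_y0).
- exact: card_matching_in_le.
- exact: card_backward_in_le.
- exact: in_edges_gadj_gt0.
Qed.

End WellSpread.

Definition misses_large n (E : {set 'I_n * 'I_n}) : bool :=
  [exists p : {set 'I_n} * {set 'I_n},
    (3 * n <= #|p.1| * #|p.2|) && [disjoint E & setX p.1 p.2]].

Definition misses_column n (E : {set 'I_n * 'I_n}) : bool :=
  [exists p : 'I_n * {set 'I_n}, (#|p.2| == n - 3) && [disjoint E & setX p.2 [set p.1]]].

Definition misses_row n (E : {set 'I_n * 'I_n}) : bool :=
  [exists p : 'I_n * {set 'I_n}, (#|p.2| == n - 3) && [disjoint E & setX [set p.1] p.2]].

Lemma balanced_of_not_misses n (M : {perm 'I_n}) (E : {set 'I_n * 'I_n}) :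
  16 <= n -> ~~ [|| misses_large E, misses_column E | misses_row E] ->
  balanced (gadj M E) (8 * n).
Proof.
rewrite !negb_or => n_ge16 /and3P [/existsPn large /existsPn column /existsPn row].
apply: well_spread_balanced => // [X Y le3n | l X cardX | r Y cardY].
- by have := large (X, Y); rewrite /= le3n.
- by have := column (l, X); rewrite /= cardX eqxx.
- by have := row (r, Y); rewrite /= cardY eqxx.
Qed.

Section Probability.
Variable n : nat.
Local Notation pr := (@prob_E n).
Local Open Scope ring_scope.

Fact card_sets_gt0 : (0 < #|{set 'I_n * 'I_n}|)%N.
Proof. by apply/card_gt0P; exists set0. Qed.

Fact inv_card_sets_gt0 : 0 < #|{set 'I_n * 'I_n}|%:R^-1 :> rat.
Proof. by rewrite invr_gt0 ltr0n card_sets_gt0. Qed.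

Lemma prob_E_le (P Q : pred {set 'I_n * 'I_n}) :
  (forall E, P E -> Q E) -> pr P <= pr Q.
Proof.
move=> PQ; rewrite ler_pM2r ?inv_card_sets_gt0 // ler_nat.
by apply/subset_leq_card/subsetP => E; rewrite !inE; apply: PQ.
Qed.

Lemma prob_E_predC (P : pred {set 'I_n * 'I_n}) : pr (fun E => ~~ P E) = 1 - pr P.
Proof.
have card_sets : (#|[set E | P E]| + #|[set E | ~~ P E]| = #|{set 'I_n * 'I_n}|)%N.
  by rewrite -(cardsC [set E | P E]); congr (_ + _)%N; apply: eq_card => E; rewrite !inE.
have N_neq0 : #|{set 'I_n * 'I_n}|%:R != 0 :> rat by rewrite pnatr_eq0 -lt0n card_sets_gt0.
by rewrite /prob_E -card_sets natrD in N_neq0 *; field.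
Qed.

Lemma prob_E_or (P Q : pred {set 'I_n * 'I_n}) :
  pr (fun E => P E || Q E) <= pr P + pr Q.
Proof.
rewrite /prob_E -mulrDl ler_pM2r ?inv_card_sets_gt0 // -natrD ler_nat.
have -> : [set E | P E || Q E] = [set E | P E] :|: [set E | Q E].
  by apply/setP => E; rewrite !inE.
exact: (leq_card_setU _ _).1.
Qed.

Lemma prob_E_exists (I : finType) (A : pred I) (Q : I -> pred {set 'I_n * 'I_n}) :
  pr (fun E => [exists i, A i && Q i E]) <= \sum_(i | A i) pr (Q i).
Proof.
rewrite /prob_E -mulr_suml ler_pM2r ?inv_card_sets_gt0 // -natr_sum ler_nat.
have -> : [set E | [exists i, A i && Q i E]] = \bigcup_(i | A i) [set E | Q i E].
  apply/setP => E; rewrite inE; apply/existsP/bigcupP => -[i].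
    by case/andP => Ai QiE; exists i; rewrite ?inE.
  by rewrite inE => Ai QiE; exists i; apply/andP.
exact: card_bigcup_le.
Qed.

Lemma prob_E_disjoint (D : {set 'I_n * 'I_n}) :
  pr (fun E => [disjoint E & D]) = (2 ^+ #|D|)^-1.
Proof.
rewrite /prob_E card_sets_disjoint card_sets.
by rewrite -(cardsC D) expnD natrM !natrX invfM mulrCA mulfV ?mulr1 ?expf_neq0.
Qed.

Lemma prob_misses_large : pr (@misses_large n) <= (2 ^+ n)^-1.
Proof.
apply: le_trans (prob_E_exists _ _) _.
apply: le_trans (_ : _ <= \sum_(p : {set 'I_n} * {set 'I_n}) (2 ^+ (3 * n))^-1 :> rat) _.
  rewrite big_mkcond; apply: ler_sum => p _; case: ifP => [le3n | _].
    rewrite prob_E_disjoint cardsX -!exprVn; apply: ler_wiXn2l => //.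
  by rewrite -exprVn exprn_ge0 // invr_ge0.
rewrite sumr_const card_prod !card_sets card_ord -[_ *+ (_ * _)]mulr_natr natrM natrX.
rewrite (_ : 3 * n = n + n + n)%N; last lia.
rewrite [X in X <= _](_ : _ = (2 ^+ n)^-1) // !exprD.
by field; rewrite expf_neq0.
Qed.

Lemma prob_misses_thin (F : 'I_n * {set 'I_n} -> {set 'I_n * 'I_n}) :
  (3 <= n)%N -> (forall p, #|F p| = #|p.2|) ->
  pr (fun E => [exists p : 'I_n * {set 'I_n}, (#|p.2| == n - 3)%N && [disjoint E & F p]])
    <= (8 * n ^ 4)%:R / 2 ^+ n.
Proof.
move=> n_ge3 cardF; apply: le_trans (prob_E_exists _ _) _.
rewrite (eq_bigr (fun _ => 2 ^- (n - 3)%N)) => [|p /eqP cardp]; last first.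
  by rewrite prob_E_disjoint cardF cardp.
rewrite sumr_const (eq_card (B := [predX 'I_n & [set X : {set 'I_n} | #|X| == n - 3]%N]));
  last by move=> [i X]; rewrite !inE.
rewrite cardX card_ord card_draws card_ord bin_sub // -[_ *+ (n * _)]mulr_natl.
have pow_n : 2 ^+ n = 2 ^+ 3 * 2 ^+ (n - 3) :> rat by rewrite -exprD subnKC.
rewrite pow_n invfM mulrA ler_pM2r ?invr_gt0 ?exprn_gt0 //.
rewrite (_ : (8 * n ^ 4)%:R / 2 ^+ 3 = (n ^ 4)%:R :> rat); last by rewrite natrM; field.
by rewrite ler_nat expnS leq_mul2l bin_le_expn orbT.
Qed.

End Probability.

Lemma tail_bound n : (64 <= n)%N ->
  ((2 ^+ n)^-1 + (8 * n ^ 4)%:R / 2 ^+ n + (8 * n ^ 4)%:R / 2 ^+ n <= n%:R^-1 :> rat)%R.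
Proof.
move=> n_ge64.
have -> : ((2 ^+ n)^-1 + (8 * n ^ 4)%:R / 2 ^+ n + (8 * n ^ 4)%:R / 2 ^+ n
          = (1 + 16 * n ^ 4)%:R / (2 ^ n)%:R :> rat)%R.
  by rewrite natrX !natrD !natrM; field; rewrite expf_neq0.
rewrite ler_pdivrMr ?ltr0n ?expn_gt0 // ler_pdivlMl ?ltr0n; last lia.
by rewrite -natrM ler_nat; have := exp2_ge_poly n_ge64; rewrite expnS; nia.
Qed.

Theorem lemma7 :
  exists n0 : nat, forall n : nat, (n0 <= n)%N ->
    forall M : {perm 'I_n},
      (1 - (n%:R)^-1 <= prob_E (fun E => balanced (gadj M E) (8 * n)) :> rat)%R.
Proof.
exists 64 => n n_ge64 M.
have n_ge3 : 3 <= n by lia.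
pose bad E := [|| @misses_large n E, misses_column E | misses_row E].
have good_balanced : (prob_E (fun E => ~~ bad E)
                      <= prob_E (fun E => balanced (gadj M E) (8 * n)))%R.
  by apply: prob_E_le => E; apply: balanced_of_not_misses; lia.
have large := prob_misses_large n.
have column : (prob_E (@misses_column n) <= (8 * n ^ 4)%:R / 2 ^+ n)%R.
  by apply: prob_misses_thin => // p; rewrite cardsX cards1 muln1.
have row : (prob_E (@misses_row n) <= (8 * n ^ 4)%:R / 2 ^+ n)%R.
  by apply: prob_misses_thin => // p; rewrite cardsX cards1 mul1n.
have bad_or := prob_E_or (@misses_large n) (fun E => misses_column E || misses_row E).
have thin_or := prob_E_or (@misses_column n) (@misses_row n).
have := tail_bound n_ge64; rewrite prob_E_predC in good_balanced; lra.
Qed.
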